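(* Let $G$ be a graph containing a subgraph $F$ isomorphic to $F_4$, with vertices labelled $u_0,u_1,u_2,u_3$ as described in the context and $U=\{u_1,u_2,u_3\}$, and let $T$ be a triangle of $G$ vertex-disjoint from $F$. If $d(u_{3},T)\geq 2$, or if $e(U,V(T))\geq 6$ and $d(u_{3},T)>0$, then $G[V(T)\cup V(F)]$ contains a triangle and a quadrilateral that are vertex-disjoint.
   Context: All graphs are finite, simple and undirected. $F_4$ denotes the graph with $4$ vertices and $4$ edges not containing a $4$-cycle, i.e. a claw (star $K_{1,3}$) with one additional edge joining two of its leaves (a triangle with a pendant edge). In a copy of $F_4$, $u_0$ denotes its unique vertex of degree $3$ in $F_4$, $u_1,u_2$ its two vertices of degree $2$ in $F_4$, and $u_3$ its unique vertex of degree $1$ in $F_4$ (so $F_4$ has edges $u_0u_1,u_0u_2,u_1u_2,u_0u_3$). For a vertex $v$ and subgraph $H$, $d(v,H)$ is the number of neighbours of $v$ in $G$ lying in $V(H)$; for disjoint vertex sets $L,M$, $e(L,M)$ is the number of edges of $G$ between $L$ and $M$. $G[W]$ is the subgraph induced by $W$. *)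

From mathcomp Require Import all_boot.
Set Implicit Arguments. Unset Strict Implicit. Unset Printing Implicit Defensive.

Definition simple_graph (V : finType) (g : rel V) : Prop :=
  symmetric g /\ irreflexive g.

Definition is_triangle (V : finType) (g : rel V) (a b c : V) : Prop :=
  [/\ g a b, g b c & g a c].

Definition is_quad (V : finType) (g : rel V) (p q r s : V) : Prop :=
  uniq [:: p; q; r; s] /\ [/\ g p q, g q r, g r s & g s p].

Definition is_F4 (V : finType) (g : rel V) (u0 u1 u2 u3 : V) : Prop :=
  uniq [:: u0; u1; u2; u3] /\ [/\ g u0 u1, g u0 u2, g u1 u2 & g u0 u3].

Definition deg_in (V : finType) (g : rel V) (v : V) (S : {set V}) : nat :=
  #|[set x in S | g v x]|.

Definition e_between (V : finType) (g : rel V) (L M : {set V}) : nat :=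
  #|[set xy in setX L M | g xy.1 xy.2]|.

Definition has_disjoint_tri_quad (V : finType) (g : rel V) (W : {set V}) : Prop :=
  exists a b c p q r s : V,
    [/\ is_triangle g a b c, is_quad g p q r s,
        {subset [:: a; b; c; p; q; r; s] <= W}
      & uniq [:: a; b; c; p; q; r; s]].

From mathcomp Require Import all_boot zify.

(* If the pendant vertex u3 sees two vertices x, y of T, the 4-cycle u3 x z y
   (z the third vertex of T) is disjoint from the triangle u0 u1 u2.  If u3 sees
   only x, then e(U, T) >= 6 forces five of the six edges between {u1, u2} and T,
   so one of u1, u2 (say u1) sees the other two vertices y, z of T while u2 sees
   x: then u1 y z is a triangle and u0 u3 x u2 a disjoint 4-cycle. *)

Lemma deg_in_sum (V : finType) (g : rel V) (v : V) (S : {set V}) :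
  deg_in g v S = \sum_(x in S) g v x.
Proof.
rewrite /deg_in -sum1_card big_mkcond [RHS]big_mkcond /=.
by apply: eq_bigr => x _; rewrite inE; case: (x \in S); case: (g v x).
Qed.

Lemma e_between_sum (V : finType) (g : rel V) (L M : {set V}) :
  e_between g L M = \sum_(x in L) deg_in g x M.
Proof.
rewrite /e_between -sum1_card.
under [RHS]eq_bigr => x _ do rewrite /deg_in -sum1_card big_set /=.
by rewrite pair_big_dep; apply: eq_bigl => -[x y]; rewrite !inE andbA.
Qed.

Lemma big_set3 (T : finType) (F : T -> nat) (a b c : T) :
  uniq [:: a; b; c] -> \sum_(x in [set a; b; c]) F x = F a + F b + F c.
Proof.
rewrite /= !inE !negb_or => /and3P[/andP[ab ac] bc _].
rewrite setUC big_setU1 ?big_setU1 ?big_set1 /=; first exact: addnC.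
  by rewrite inE.
by rewrite !inE negb_or ![c == _]eq_sym ac bc.
Qed.

Lemma five_of_six_true (p1 p2 p3 q1 q2 q3 : bool) :
  5 <= p1 + p2 + p3 + q1 + q2 + q3 -> [&& p1, q2 & q3] || [&& q1, p2 & p3].
Proof. by case: p1; case: p2; case: p3; case: q1; case: q2; case: q3. Qed.

Section TriangleAndPendantF4.

Context {V : finType} {g : rel V}.
Hypothesis gsym : symmetric g.
Context {u0 u1 u2 u3 a b c : V} {W : {set V}}.
Hypothesis F4 : is_F4 g u0 u1 u2 u3.
Hypothesis T3 : is_triangle g a b c.
Hypothesis uniq7 : uniq [:: u0; u1; u2; u3; a; b; c].
Hypothesis sub7 : {subset [:: u0; u1; u2; u3; a; b; c] <= W}.

Lemma triangle_clique x y : x \in [:: a; b; c] -> y \in [:: a; b; c] -> x != y -> g x y.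
Proof.
have [ab bc ac] := T3.
by rewrite !inE => /or3P[]/eqP-> /or3P[]/eqP->; rewrite ?eqxx // => _; rewrite 1?gsym.
Qed.

Lemma is_triangle_perm x y z : perm_eq [:: x; y; z] [:: a; b; c] -> is_triangle g x y z.
Proof.
move=> pxyz; have : uniq ([:: u0; u1; u2; u3] ++ [:: a; b; c]) := uniq7.
rewrite cat_uniq => /and3P[_ _].
rewrite -(perm_uniq pxyz) /= !inE !negb_or => /and3P[/andP[xy xz] yz _].
have mem t : t \in [:: x; y; z] -> t \in [:: a; b; c] by rewrite (perm_mem pxyz).
by split; apply: triangle_clique; rewrite ?mem // !inE eqxx ?orbT.
Qed.

Lemma tri_quad_of_perm (xyz : seq V) : perm_eq xyz [:: a; b; c] ->
  forall x1 x2 x3 x4 x5 x6 x7,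
  perm_eq [:: x1; x2; x3; x4; x5; x6; x7] ([:: u0; u1; u2; u3] ++ xyz) ->
  is_triangle g x1 x2 x3 -> [/\ g x4 x5, g x5 x6, g x6 x7 & g x7 x4] ->
  has_disjoint_tri_quad g W.
Proof.
move=> pxyz x1 x2 x3 x4 x5 x6 x7 p7 tri quad.
have {pxyz}p7 : perm_eq [:: x1; x2; x3; x4; x5; x6; x7] [:: u0; u1; u2; u3; a; b; c].
  by apply: perm_trans p7 _; rewrite perm_cat2l.
have u7 : uniq [:: x1; x2; x3; x4; x5; x6; x7] by rewrite (perm_uniq p7).
exists x1, x2, x3, x4, x5, x6, x7; split=> //.
- have : uniq ([:: x1; x2; x3] ++ [:: x4; x5; x6; x7]) := u7.
  by rewrite cat_uniq => /and3P[].
- by move=> t; rewrite (perm_mem p7); apply: sub7.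
Qed.

Lemma tri_quad_of_pendant_neighbour x y z :
  perm_eq [:: x; y; z] [:: a; b; c] -> g u3 x ->
  [|| g u3 y, g u3 z | 5 <= g u1 x + g u1 y + g u1 z + g u2 x + g u2 y + g u2 z] ->
  has_disjoint_tri_quad g W.
Proof.
move=> pxyz u3x; have [_ [u0u1 u0u2 u1u2 u0u3]] := F4.
have [xy yz xz] := is_triangle_perm _ _ _ pxyz.
have witness := tri_quad_of_perm _ pxyz.
case/or3P=> [u3y | u3z | /five_of_six_true/orP[/and3P[u1x u2y u2z] | /and3P[u2x u1y u1z]]].
- by apply: (witness u0 u1 u2 u3 x z y);
    [apply/permP => P /=; clear -P; lia | split | split; rewrite // gsym].
- by apply: (witness u0 u1 u2 u3 x y z);
    [apply/permP => P /=; clear -P; lia | split | split; rewrite // gsym].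
- by apply: (witness u2 y z u0 u3 x u1);
    [apply/permP => P /=; clear -P; lia | split | split; rewrite // gsym].
- by apply: (witness u1 y z u0 u3 x u2);
    [apply/permP => P /=; clear -P; lia | split | split; rewrite // gsym].
Qed.

Lemma tri_quad_of_degrees (d3 := g u3 a + g u3 b + g u3 c) :
  2 <= d3 \/ 6 <= (g u1 a + g u1 b + g u1 c) + (g u2 a + g u2 b + g u2 c) + d3 /\ 0 < d3 ->
  has_disjoint_tri_quad g W.
Proof.
rewrite {}/d3 => deg.
case u3a: (g u3 a); last case u3b: (g u3 b); last case u3c: (g u3 c).
- apply: (tri_quad_of_pendant_neighbour a b c) => //.
  by move: deg; rewrite u3a; case: (g u3 b); case: (g u3 c) => //=; lia.
- apply: (tri_quad_of_pendant_neighbour b c a) => //.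
    by rewrite (perm_rot 1 [:: a; b; c]).
  by move: deg; rewrite u3a u3b; case: (g u3 c) => //=; lia.
- apply: (tri_quad_of_pendant_neighbour c a b) => //.
    by rewrite (perm_rot 2 [:: a; b; c]).
  by move: deg; rewrite u3a u3b u3c /=; lia.
- by move: deg; rewrite u3a u3b u3c => -[|[]].
Qed.

End TriangleAndPendantF4.

Theorem lemma8 (V : finType) (g : rel V) (u0 u1 u2 u3 t1 t2 t3 : V) :
  simple_graph g ->
  is_F4 g u0 u1 u2 u3 ->
  is_triangle g t1 t2 t3 ->
  uniq [:: u0; u1; u2; u3; t1; t2; t3] ->
  let VT := [set t1; t2; t3] in
  let U := [set u1; u2; u3] in
  (2 <= deg_in g u3 VT \/ (6 <= e_between g U VT /\ 0 < deg_in g u3 VT)) ->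
  has_disjoint_tri_quad g (VT :|: [set u0; u1; u2; u3]).
Proof.
move=> [gsym _] F4 T3 uniq7 VT U deg.
have : uniq ([:: u0] ++ [:: u1; u2; u3] ++ [:: t1; t2; t3]) := uniq7.
rewrite !cat_uniq => /and3P[_ _ /and3P[uniqU _ uniqT]].
have deg_VT v : deg_in g v VT = g v t1 + g v t2 + g v t3.
  by rewrite deg_in_sum big_set3.
move: deg; rewrite e_between_sum big_set3 // !deg_VT => deg.
apply: (tri_quad_of_degrees gsym F4 T3 uniq7 _ deg).
by apply/allP; rewrite /= /VT !inE !eqxx !orbT.
Qed.
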